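(* Let $\mathcal G$ be a second countable Baire topological space, let $X$ be a finite-dimensional $C^1$ manifold (Hausdorff, second countable), and let $\mathcal H \subset \mathcal G \times X$ be a closed subset. Suppose that for each $(g_0,x_0)\in\mathcal H$ there exists an $n$-dimensional slice across $\mathcal H$ at $(g_0,x_0)$ for some $n > \dim X$. Then the set \[ \{g \in \mathcal G : (g,x) \in \mathcal H \text{ for some } x \in X \} \] is meager in $\mathcal G$. If moreover $X$ is compact, then this set is closed and nowhere dense.
   Context: Given $(g_0,x_0)\in\mathcal H$ and a positive integer $n$, an $n$-dimensional slice across $\mathcal H$ at $(g_0,x_0)$ is a map $\Phi:U\times V\to\mathbb R^n$, where $U$ is a neighborhood of $0$ in $\mathbb R^n$ and $V$ a neighborhood of $x_0$ in $X$, such that: (1) there is a continuous map $\rho:U\to\mathcal G$ with $\rho(0)=g_0$; (2) there is a continuous map $\pi:\rho(U)\times V\to\mathbb R^n$ with $\pi(\mathcal H)=\{0\}$ (i.e. $\pi$ vanishes on $\mathcal H\cap(\rho(U)\times V)$); (3) $\Phi(s,x)=\pi(\rho(s),x)$ is $C^1$ on $U\times V$; (4) $\det d_s\Phi(0,x_0)\neq 0$. *)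

From HB Require Import structures.
From mathcomp Require Import all_boot all_order all_algebra.
From mathcomp Require Import all_classical all_reals all_analysis.
Set Implicit Arguments. Unset Strict Implicit. Unset Printing Implicit Defensive.
Import Order.TTheory GRing.Theory Num.Theory.
Import numFieldNormedType.Exports.
Local Open Scope classical_set_scope.
Local Open Scope ring_scope.

Definition baire_space (T : topologicalType) : Prop :=
  forall F : (set T)^nat, (forall i, open (F i) /\ dense (F i)) ->
  dense (\bigcap_i F i).

Definition nowhere_dense (T : topologicalType) (S : set T) : Prop :=
  (closure S)° = set0.

Definition meager (T : topologicalType) (S : set T) : Prop :=
  exists F : (set T)^nat, (forall i, nowhere_dense (F i)) /\
    S `<=` \bigcup_i F i.

Definition C1_on (R : realType) (k l : nat) (A : set 'rV[R]_k)
    (f : 'rV[R]_k -> 'rV[R]_l) : Prop :=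
  forall x, A x -> differentiable f x /\
    forall v : 'rV[R]_k, {for x, continuous ('D_v f)}.

Record chart (R : realType) (X : topologicalType) (m : nat) := Chart {
  ch_dom : set X;
  ch_map : X -> 'rV[R]_m;
  ch_inv : 'rV[R]_m -> X }.

Definition is_chart (R : realType) (X : topologicalType) (m : nat)
    (c : chart R X m) : Prop :=
  [/\ open (ch_dom c) /\ open (ch_map c @` ch_dom c),
      {within ch_dom c, continuous (ch_map c)},
      {within ch_map c @` ch_dom c, continuous (ch_inv c)},
      (forall x, ch_dom c x -> ch_inv c (ch_map c x) = x) &
      (forall y, (ch_map c @` ch_dom c) y -> ch_map c (ch_inv c y) = y)].

Definition C1_atlas (R : realType) (X : topologicalType) (m : nat)
    (Atl : set (chart R X m)) : Prop :=
  [/\ (forall c, Atl c -> is_chart c),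
      (forall x : X, exists c, Atl c /\ ch_dom c x) &
      (forall c1 c2, Atl c1 -> Atl c2 ->
         C1_on (ch_map c1 @` (ch_dom c1 `&` ch_dom c2))
               (ch_map c2 \o ch_inv c1))].

(** A map [Phi : R^n x X -> R^k] is C^1 on [U x V] (U open in R^n, V open in
    X), the C^1 structure of X being given by the atlas [Atl]: in every chart,
    the local expression (s, y) |-> Phi (s, chart^-1 y) is C^1 (here R^n x R^m
    is identified with R^(n+m) via block row vectors). *)
Definition C1_map (R : realType) (X : topologicalType) (m n k : nat)
    (Atl : set (chart R X m)) (U : set 'rV[R]_n) (V : set X)
    (Phi : 'rV[R]_n -> X -> 'rV[R]_k) : Prop :=
  forall c, Atl c ->
    C1_on [set z : 'rV[R]_(n + m) | U (lsubmx z) /\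
                                    (ch_map c @` (ch_dom c `&` V)) (rsubmx z)]
          (fun z => Phi (lsubmx z) (ch_inv c (rsubmx z))).

Definition slice (R : realType) (G X : topologicalType) (m : nat)
    (Atl : set (chart R X m)) (H : set (G * X)) (g0 : G) (x0 : X) (n : nat)
    : Prop :=
  exists (U : set 'rV[R]_n) (V : set X) (rho : 'rV[R]_n -> G)
         (pi : G -> X -> 'rV[R]_n),
    [/\ (open U /\ U 0) /\ (open V /\ V x0),
        {within U, continuous rho} /\ rho 0 = g0,
        {within [set p : G * X | (rho @` U) p.1 /\ V p.2],
                    continuous (fun p : G * X => pi p.1 p.2)} /\
                  (forall g x, (rho @` U) g -> V x -> H (g, x) -> pi g x = 0),
        C1_map Atl U V (fun s x => pi (rho s) x) &
        \det ('J (fun s => pi (rho s) x0) 0) != 0].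

(* Near a point (g0, x0) of H, a slice read in a chart at x0 puts H inside
   the zero set of a C^1 map F (s, y) : R^n x R^m -> R^n whose derivative in s
   is invertible.  Near (0, y0) these zeros form a Lipschitz graph s = phi (y)
   over an m-dimensional set, which cannot fill an n-dimensional ball when
   m < n; so arbitrarily close to g0 there are parameters whose fibre misses a
   neighbourhood of x0.  Taking compact neighbourhoods K of x0 from a countable
   base, g0 then lies in the boundary of the closed projection of H over K, and
   the projection of H is covered by countably many such boundaries, each
   nowhere dense.  For compact X that projection is closed, and a closed
   meager set in a Baire space is nowhere dense. *)

From HB Require Import structures.
From mathcomp Require Import all_boot all_order all_algebra.
From mathcomp Require Import all_classical all_reals all_analysis.
From mathcomp Require Import ring lra.
Import Order.TTheory GRing.Theory Num.Theory.
Import numFieldNormedType.Exports.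
Local Open Scope classical_set_scope.
Local Open Scope ring_scope.

Section RowVectorNorms.
Context {R : realDomainType}.

Lemma rV_entry_le_norm {k} (v : 'rV[R]_k) i : `|v ord0 i| <= `|v|.
Proof.
rewrite [leRHS]/Num.Def.normr /= mx_normrE.
exact: (le_bigmax _ (fun ij : 'I_1 * 'I_k => `|v ij.1 ij.2|) (ord0, i)).
Qed.

Lemma rV_norm_le {k} (v : 'rV[R]_k) (r : R) :
  0 <= r -> (forall i, `|v ord0 i| <= r) -> `|v| <= r.
Proof.
move=> r0 vr; rewrite [leLHS]/Num.Def.normr /= mx_normrE.
by apply: bigmax_le => // -[i j] _ /=; rewrite (ord1 i).
Qed.

Lemma rV_norm_lt {k} (v : 'rV[R]_k) (r : R) :
  0 < r -> (forall i, `|v ord0 i| < r) -> `|v| < r.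
Proof.
move=> r0 vr; rewrite [ltLHS]/Num.Def.normr /= mx_normrE.
by apply: bigmax_lt => // -[i j] _ /=; rewrite (ord1 i).
Qed.

Lemma row_mx_norm_le {a b} (u : 'rV[R]_a) (w : 'rV[R]_b) (r : R) :
  0 <= r -> `|u| <= r -> `|w| <= r -> `|row_mx u w| <= r.
Proof.
move=> r0 ur wr; apply: rV_norm_le => // i.
rewrite -(fintype.splitK i); case: (fintype.split i) => j /=.
- by rewrite row_mxEl (le_trans (rV_entry_le_norm _ _)).
- by rewrite row_mxEr (le_trans (rV_entry_le_norm _ _)).
Qed.

Lemma mulmx_entry_le {a b} (v : 'rV[R]_a) (M : 'M[R]_(a, b)) j (e : R) :
  (forall i, `|M i j| <= e) -> `|(v *m M) ord0 j| <= a%:R * e * `|v|.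
Proof.
move=> Me; rewrite mxE (le_trans (ler_norm_sum _ _ _))//.
apply: le_trans (_ : \sum_(i < a) (e * `|v|) <= _).
  by apply: ler_sum => i _; rewrite normrM mulrC ler_pM ?rV_entry_le_norm.
by rewrite sumr_const card_ord -mulrA mulr_natl.
Qed.

Lemma mulmx_norm_bound {a b} (M : 'M[R]_(a, b)) :
  exists2 K, 0 < K & forall v : 'rV[R]_a, `|v *m M| <= K * `|v|.
Proof.
pose e := \sum_(ij : 'I_a * 'I_b) `|M ij.1 ij.2|.
have e0 : 0 <= e by apply: sumr_ge0.
exists (a%:R * e + 1); first by rewrite ltr_pwDr // mulr_ge0.
move=> v; apply: rV_norm_le => [|j]; first by rewrite mulr_ge0 // addr_ge0 // mulr_ge0.
have Me i : `|M i j| <= e by rewrite /e (bigD1 (i, j)) //= lerDl sumr_ge0.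
apply: le_trans (mulmx_entry_le v M j e Me) _.
by rewrite ler_wpM2r ?lerDl.
Qed.

End RowVectorNorms.

Section Packing.
Context {R : archiRealFieldType}.

Lemma natr_dist_ge1 (x y : nat) : x != y -> 1 <= `|x%:R - y%:R : R|.
Proof.
move=> xy; case: (ltngtP x y) xy => // h _.
- by rewrite distrC -(natrB R (ltnW h)) normr_nat ler1n subn_gt0.
- by rewrite -(natrB R (ltnW h)) normr_nat ler1n subn_gt0.
Qed.

Lemma truncn_eq_dist_lt1 (t t' : R) : 0 <= t -> 0 <= t' ->
  Num.truncn t = Num.truncn t' -> `|t - t'| < 1.
Proof.
move=> t0 t'0 tt'.
have /andP[lb ub] := truncn_itv t0; have /andP[lb' ub'] := truncn_itv t'0.
move: lb ub; rewrite tt' -natr1; move: lb' ub'; rewrite -natr1.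
by move: (Num.truncn t')%:R => k *; rewrite ltr_norml; apply/andP; split; lra.
Qed.

(* Distinct points fall into distinct cells of the grid of mesh [h]. *)
Lemma separated_card_le {I : finType} {m} (y : I -> 'rV[R]_m) (y0 : 'rV[R]_m)
    (delta h : R) : 0 < h ->
  (forall i, `|y i - y0| <= delta) ->
  (forall i j, i != j -> h <= `|y i - y j|) ->
  (#|I| <= (Num.truncn (2 * delta / h)).+1 ^ m)%N.
Proof.
move=> h0 yb ysep.
pose L := (Num.truncn (2 * delta / h)).+1.
pose cell i j : R := (y i ord0 j - y0 ord0 j + delta) / h.
have yjb i j : `|y i ord0 j - y0 ord0 j| <= delta.
  by have := rV_entry_le_norm (y i - y0) j; rewrite !mxE => /le_trans; apply.
have cell0 i j : 0 <= cell i j.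
  rewrite divr_ge0 ?(ltW h0) //; move: (yjb i j); rewrite ler_norml => /andP[? ?]; lra.
have cellL i j : (Num.truncn (cell i j) < L)%N.
  rewrite ltnS le_truncn // ler_pM2r ?invr_gt0 //.
  by move: (yjb i j); rewrite ler_norml => /andP[? ?]; lra.
pose f i : {ffun 'I_m -> 'I_L} := [ffun j => Ordinal (cellL i j)].
suff /leq_card : injective f by rewrite card_ffun !card_ord.
move=> i i' fii'; apply: (@contraTeq _ (`|y i - y i'| < h)).
  by move=> /ysep; rewrite leNgt.
apply: rV_norm_lt => // j.
have := congr1 (fun g : {ffun 'I_m -> 'I_L} => nat_of_ord (g j)) fii'.
rewrite !ffunE /= => /(truncn_eq_dist_lt1 _ _ (cell0 i j) (cell0 i' j)).
rewrite /cell -mulrBl normrM normfV (gtr0_norm h0) ltr_pdivrMr // mul1r !mxE.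
by congr (`|_| < _); ring.
Qed.

Lemma expn_cells_lt_grid {m n : nat} (b L : nat) : (m < n)%N ->
  (L <= b * (b ^ m).+1)%N -> (L ^ m < (b ^ m).+1 ^ n)%N.
Proof.
move=> mn Lb; apply: (@leq_ltn_trans ((b * (b ^ m).+1) ^ m)).
  by case: m mn Lb => [|m] _ Lb; rewrite ?expn0 ?leq_exp2r.
rewrite expnMn; apply: (@leq_trans ((b ^ m).+1 ^ m.+1)); last exact: leq_pexp2l.
by rewrite expnS mulnC [X in (_ < X)%N]mulnC ltn_pmul2l ?expn_gt0.
Qed.

(* The K^n points of a grid of mesh eps/2K in the ball must go to pairwise
   distinct cells of mesh eps/2KC, and only O(K^m) of those meet the image. *)
Lemma no_inverse_lipschitz_map {n m} (Y : 'rV[R]_n -> 'rV[R]_m) (y0 : 'rV[R]_m)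
    (C delta eps : R) : (m < n)%N -> 0 < C -> 0 < delta -> 0 < eps ->
  (forall s, `|s| < eps -> `|Y s - y0| <= delta) ->
  ~ (forall s s', `|s| < eps -> `|s'| < eps -> `|s - s'| <= C * `|Y s - Y s'|).
Proof.
move=> mn C0 d0 e0 Yb Ylip.
pose a := 4 * delta * C / eps.
pose b := (Num.truncn a).+1.
pose K := (b ^ m).+1.
have K0 : 0 < K%:R :> R by rewrite ltr0n.
pose d := eps / (2 * K%:R).
have d0' : 0 < d by rewrite divr_gt0 // mulr_gt0.
pose s (phi : {ffun 'I_n -> 'I_K}) : 'rV[R]_n := \row_i ((phi i)%:R * d).
have s_small phi : `|s phi| < eps.
  apply: rV_norm_lt => // i; rewrite mxE normrM normr_nat (gtr0_norm d0').
  apply: (@le_lt_trans _ _ (K%:R * d)).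
    by rewrite ler_wpM2r ?(ltW d0') // ler_nat ltnW.
  have -> : K%:R * d = eps / 2 by rewrite /d; field; rewrite gt_eqF.
  lra.
have s_sep phi phi' : phi != phi' -> d <= `|s phi - s phi'|.
  move=> neq; have [i phii] : exists i, phi i <> phi' i.
    apply: contrapT => /forallNP eq; move/eqP: neq; apply; apply/ffunP => i.
    exact: contrapT (eq i).
  apply: le_trans (rV_entry_le_norm _ i).
  rewrite !mxE -mulrBl normrM (gtr0_norm d0') ler_peMl ?(ltW d0') // natr_dist_ge1 //.
  by apply/eqP => /ord_inj.
have Ys_sep phi phi' : phi != phi' -> d / C <= `|Y (s phi) - Y (s phi')|.
  move=> /s_sep ds; rewrite ler_pdivrMr // mulrC; apply: le_trans ds _.
  exact: Ylip.
have := separated_card_le (fun phi => Y (s phi)) y0 delta (d / C) (divr_gt0 d0' C0)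
  (fun phi => Yb _ (s_small phi)) Ys_sep.
rewrite card_ffun !card_ord; set L := (Num.truncn _).+1 => card.
have L_le : (L <= b * K)%N.
  rewrite /L truncn_lt_nat; last by apply/ltW; rewrite !divr_gt0 ?mulr_gt0.
  have -> : 2 * delta / (d / C) = a * K%:R by rewrite /a /d; field; rewrite ?gt_eqF.
  by rewrite natrM ltr_pM2r // truncnS_gt.
by have := expn_cells_lt_grid b L mn L_le; rewrite ltnNge card.
Qed.

End Packing.

Section Calculus.
Context {R : realType}.

Lemma derive_along_line {k l} (f : 'rV[R]_k -> 'rV[R]_l) (p w : 'rV[R]_k) (t : R) j :
  differentiable f (p + t *: w) ->
  is_derive t 1 (fun t => f (p + t *: w) ord0 j) ('D_w f (p + t *: w) ord0 j).
Proof.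
move=> df; pose g t := f (p + t *: w).
have g_shift : (fun h : R => h^-1 *: ((g \o shift t) (h *: 1) - g t))
    = (fun h : R => h^-1 *: ((f \o shift (p + t *: w)) (h *: w) - g t)).
  apply/funext => h /=; congr (_ *: (f _ - _)).
  by rewrite /shift /= scaler1 scalerDl addrC -addrA (addrC (t *: w)).
have dg : derivable g t 1 by rewrite /derivable g_shift; exact: diff_derivable.
split; first by move/derivable_mxP : dg => /(_ ord0 j).
have Dg : 'D_1 g t = 'D_w f (p + t *: w) by rewrite /derive g_shift.
by rewrite -Dg (derive_mx dg) mxE.
Qed.

Lemma mvt_rV_entry {k l} (f : 'rV[R]_k -> 'rV[R]_l) (p w : 'rV[R]_k) j :
  (forall t, 0 <= t <= 1 -> differentiable f (p + t *: w)) ->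
  exists2 t, 0 <= t <= 1 & (f (p + w) - f p) ord0 j = 'D_w f (p + t *: w) ord0 j.
Proof.
move=> df.
have [||t t01 e] := @MVT_segment R (fun t => f (p + t *: w) ord0 j)
   (fun t => 'D_w f (p + t *: w) ord0 j) 0 1 ler01.
- move=> t; rewrite in_itv /= => /andP[t0 t1].
  by apply: derive_along_line; apply: df; rewrite !ltW.
- apply: continuous_in_subspaceT => t; rewrite inE /= in_itv /= => t01.
  have [dgt _] := derive_along_line f p w t j (df _ t01).
  exact/differentiable_continuous/derivable1_diffP.
- exists t; first by move: t01; rewrite in_itv.
  by move: e; rewrite scale1r scale0r addr0 subr0 mulr1 !mxE.
Qed.

Lemma segment_in_ball {k} (p q p0 : 'rV[R]_k) (r t : R) : 0 <= t <= 1 ->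
  `|p - p0| < r -> `|q - p0| < r -> `|p + t *: (q - p) - p0| < r.
Proof.
move=> /andP[t0 t1] pr qr.
have -> : p + t *: (q - p) - p0 = (1 - t) *: (p - p0) + t *: (q - p0).
  by apply/rowP => i; rewrite !mxE; ring.
apply: le_lt_trans (ler_normD _ _) _.
rewrite !normrZ !ger0_norm ?subr_ge0 //.
have : (1 - t) * `|p - p0| <= (1 - t) * r.
  by apply: ler_wpM2l; [rewrite subr_ge0 | exact: ltW].
have : t * `|q - p0| <= t * r by apply: ler_wpM2l => //; exact: ltW.
nra.
Qed.

(* Strict differentiability at [p0]: apply the mean value theorem to each
   coordinate of [f] on the segment [p, q] and use the continuity of the
   partial derivatives at [p0]. *)
Lemma jacobian_strict_approx {k l} (f : 'rV[R]_k -> 'rV[R]_l) (p0 : 'rV[R]_k) :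
  (\forall z \near p0, differentiable f z) ->
  (forall v, {for p0, continuous ('D_v f)}) ->
  forall e, 0 < e -> exists2 r, 0 < r & forall p q, `|p - p0| < r -> `|q - p0| < r ->
     `|f q - f p - (q - p) *m 'J f p0| <= e * `|q - p|.
Proof.
move=> df dfc e e0.
have dfp0 : differentiable f p0 := nbhs_singleton df.
have JE z v : differentiable f z -> 'D_v f z = v *m 'J f z.
  by move=> dfz; exact: deriveEjacobian.
(* From here on the Jacobian is only used through [JE]; keeping it abstract
   prevents rewriting from unfolding its definition. *)
move: (jacobian f) JE => J JE.
pose e' := e / k.+1%:R.
have e'0 : 0 < e' by rewrite divr_gt0.
have J_near : \forall z \near p0,
    differentiable f z /\ forall i j, `|J z i j - J p0 i j| <= e'.
  have Dnear : \forall z \near p0, forall i, `|'D_('e_i) f z - 'D_('e_i) f p0| < e'.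
    apply: (@filter_forall _ _ _ _ (nbhs_filter p0)) => i.
    exact: cvgr_distC_lt (dfc ('e_i)) _ e'0.
  have J_entry z i j : differentiable f z -> J z i j = 'D_('e_i) f z ord0 j.
    by move=> dfz; rewrite (JE _ _ dfz) -rowE mxE.
  near=> z; have [dfz Dz] : differentiable f z /\ forall i,
      `|'D_('e_i) f z - 'D_('e_i) f p0| < e' by split; near: z.
  split => // i j; rewrite (J_entry z i j dfz) (J_entry p0 i j dfp0).
  have := rV_entry_le_norm ('D_('e_i) f z - 'D_('e_i) f p0) j.
  by rewrite !mxE => Dij; apply/ltW/(le_lt_trans Dij).
have /nbhs_ballP [r /= r0 near_r] := J_near.
exists r => // p q pr qr.
have seg t : 0 <= t <= 1 -> ball p0 r (p + t *: (q - p)).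
  by move=> t01; rewrite -ball_normE /= distrC segment_in_ball.
apply: rV_norm_le => [|j]; first by rewrite mulr_ge0 // ltW.
have [t t01] := mvt_rV_entry f p (q - p) j (fun t t01 => (near_r _ (seg t t01)).1).
have [dfz Jz] := near_r _ (seg t t01).
rewrite [p + _]addrC subrK (JE _ _ dfz); move: (J (p + t *: (q - p))) Jz => Jt Jz fqp.
have -> : (f q - f p - (q - p) *m J p0) ord0 j = ((q - p) *m (Jt - J p0)) ord0 j.
  by rewrite mulmxBr [in RHS]mxE -fqp !mxE.
have Jtj i : `|(Jt - J p0) i j| <= e' by rewrite !mxE; exact: Jz.
apply: le_trans (mulmx_entry_le _ _ j e' Jtj) _.
by rewrite ler_wpM2r // /e' mulrA ler_pdivrMr ?ltr0n // mulrC ler_pM2l // ler_nat.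
Unshelve. all: by end_near. Qed.

End Calculus.

Section Zeros.
Context {R : realType}.

Lemma continuous_mulmxr {a b} (M : 'M[R]_(a, b)) : continuous (@mulmxr R 1 a b M).
Proof.
apply: bounded_linear_continuous; apply/linear_boundedP.
have [K K0 MK] := mulmx_norm_bound M.
by near=> r => x; apply: le_trans (MK x) _; rewrite ler_wpM2r.
Unshelve. all: by end_near. Qed.

Lemma differentiable_row_mxl {n m} (y0 : 'rV[R]_m) (s : 'rV[R]_n) :
  differentiable (fun s : 'rV[R]_n => row_mx s y0) s.
Proof.
have -> : (fun s : 'rV[R]_n => row_mx s y0) =
    mulmxr (row_mx 1%:M 0 : 'M[R]_(n, n + m)) + cst (row_mx 0 y0).
  apply/funext => s' /=.
  rewrite -[RHS]/(mulmxr (row_mx 1%:M 0) s' + row_mx 0 y0) /mulmxr.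
  by rewrite mul_mx_row mulmx1 mulmx0 add_row_mx addr0 add0r.
apply: differentiableD; last exact: differentiable_cst.
exact/linear_differentiable/continuous_mulmxr.
Qed.

Lemma jacobian_row_mxl {n m l} (F : 'rV[R]_(n + m) -> 'rV[R]_l) (s0 : 'rV[R]_n)
    (y0 : 'rV[R]_m) : differentiable F (row_mx s0 y0) ->
  'J (fun s => F (row_mx s y0)) s0 = usubmx ('J F (row_mx s0 y0)).
Proof.
move=> dF; pose g s := F (row_mx s y0).
have dg : differentiable g s0.
  exact: (differentiable_comp (differentiable_row_mxl y0 s0)).
have Dg v : 'D_v g s0 = 'D_(row_mx v 0) F (row_mx s0 y0).
  have quotients : (fun h : R => h^-1 *: ((g \o shift s0) (h *: v) - g s0))
    = (fun h => h^-1 *: ((F \o shift (row_mx s0 y0)) (h *: row_mx v 0) - g s0)).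
    apply/funext => h /=; congr (_ *: (F _ - _)).
    by rewrite /shift /= scale_row_mx scaler0 add_row_mx add0r.
  by rewrite /derive quotients.
apply/row_matrixP => i; rewrite !rowE -(deriveEjacobian _ dg) Dg.
rewrite (deriveEjacobian _ dF); move: ('J F _) => J.
by rewrite -{1}(vsubmxK J) mul_row_col mul0mx addr0.
Qed.

Lemma invertible_block_control {n m} (A : 'M[R]_n) (B : 'M[R]_(m, n)) :
  A \in unitmx -> exists2 c, 0 < c & exists2 C, 0 < C &
  forall (ds : 'rV[R]_n) (dy : 'rV[R]_m),
    `|ds *m A + dy *m B| <= c * `|row_mx ds dy| -> `|ds| <= C * `|dy|.
Proof.
move=> Au.
have [KI KI0 invAK] := mulmx_norm_bound (invmx A).
have [KB KB0 BK] := mulmx_norm_bound B.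
exists (1 / (2 * KI)); first by rewrite divr_gt0 ?mulr_gt0.
exists (1 + 2 * KI * KB); first by rewrite ltr_pwDl // !mulr_ge0 ?ltW.
move=> ds dy small.
have ds_le : `|ds| <= KI * `|ds *m A| by have := invAK (ds *m A); rewrite mulmxK.
have dsA_le : `|ds *m A| <= `|ds *m A + dy *m B| + KB * `|dy|.
  rewrite -{1}(addrK (dy *m B) (ds *m A)).
  by apply: le_trans (ler_normB _ _) _; rewrite lerD2l.
have row_le : `|row_mx ds dy| <= `|ds| + `|dy|.
  by apply: row_mx_norm_le; rewrite ?addr_ge0 ?lerDl ?lerDr.
have : KI * `|ds *m A + dy *m B| <= (`|ds| + `|dy|) / 2.
  have -> : (`|ds| + `|dy|) / 2 = KI * (1 / (2 * KI) * (`|ds| + `|dy|)).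
    by field; rewrite gt_eqF.
  apply: ler_wpM2l; first exact: ltW.
  apply: le_trans small (ler_wpM2l _ row_le).
  by rewrite divr_ge0 ?mulr_ge0 ?ltW.
have : KI * `|ds *m A| <= KI * `|ds *m A + dy *m B| + KI * (KB * `|dy|).
  by rewrite -mulrDr; apply: ler_wpM2l; [exact: ltW | exact: dsA_le].
nra.
Qed.

Lemma zeros_lipschitz_in_param {n m} (F : 'rV[R]_(n + m) -> 'rV[R]_n) (y0 : 'rV[R]_m) :
  (\forall z \near row_mx 0 y0, differentiable F z) ->
  (forall v, {for row_mx 0 y0, continuous ('D_v F)}) ->
  \det ('J (fun s => F (row_mx s y0)) 0) != 0 ->
  exists2 r, 0 < r & exists2 C, 0 < C & forall s s' y y',
    `|s| < r -> `|y - y0| < r -> `|s'| < r -> `|y' - y0| < r ->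
    F (row_mx s y) = 0 -> F (row_mx s' y') = 0 -> `|s - s'| <= C * `|y - y'|.
Proof.
move=> dF dFc.
rewrite jacobian_row_mxl; last exact: nbhs_singleton dF.
move=> det0.
have Au : usubmx ('J F (row_mx 0 y0)) \in unitmx by rewrite unitmxE unitfE.
have [c c0 [C C0 control]] :=
  invertible_block_control _ (dsubmx ('J F (row_mx 0 y0))) Au.
have [r1 r10 approx] := jacobian_strict_approx _ _ dF dFc _ c0.
exists (r1 / 2); first by rewrite divr_gt0.
exists C => // s s' y y' sr yr s'r y'r Fsy Fs'y'.
have near_r1 (s1 : 'rV[R]_n) (y1 : 'rV[R]_m) :
    `|s1| < r1 / 2 -> `|y1 - y0| < r1 / 2 -> `|row_mx s1 y1 - row_mx 0 y0| < r1.
  move=> s1r y1r; rewrite opp_row_mx add_row_mx oppr0 addr0.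
  apply: le_lt_trans (_ : r1 / 2 < r1); last by rewrite ltr_pdivrMr // ltr_pMr ?ltr1n.
  by apply: row_mx_norm_le; rewrite ?ltW ?divr_gt0.
apply: control; move: (approx _ _ (near_r1 _ _ s'r y'r) (near_r1 _ _ sr yr)).
rewrite Fsy Fs'y' subrr sub0r normrN opp_row_mx add_row_mx.
by rewrite -{1}(vsubmxK ('J F _)) mul_row_col.
Qed.

Lemma small_zero_free_params {n m} (F : 'rV[R]_(n + m) -> 'rV[R]_n) (y0 : 'rV[R]_m) :
  (m < n)%N ->
  (\forall z \near row_mx 0 y0, differentiable F z) ->
  (forall v, {for row_mx 0 y0, continuous ('D_v F)}) ->
  \det ('J (fun s => F (row_mx s y0)) 0) != 0 ->
  exists2 delta, 0 < delta & forall eps, 0 < eps -> exists s,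
    `|s| < eps /\ forall y, `|y - y0| < delta -> F (row_mx s y) != 0.
Proof.
move=> mn dF dFc det0.
have [r r0 [C C0 lip]] := zeros_lipschitz_in_param _ _ dF dFc det0.
exists r => // eps eps0; pose e := Num.min eps r.
have e0 : 0 < e by rewrite lt_min eps0 r0.
have [e_eps e_r] : e <= eps /\ e <= r by rewrite !ge_min !lexx orbT.
apply: contrapT => /forallNP nosmall.
have zero s : exists y, `|s| < e -> `|y - y0| < r /\ F (row_mx s y) = 0.
  have [se|] := pselect (`|s| < e); last by exists y0.
  have /not_andP [|] := nosmall s; first by move/(_ (lt_le_trans se e_eps)).
  move=> /existsNP [y /not_implyP [yr /negP]]; rewrite negbK => /eqP Fsy.
  by exists y.
have [Y HY] := choice zero.
apply: (no_inverse_lipschitz_map Y y0 C r e mn C0 r0 e0).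
  by move=> s se; exact/ltW/(HY s se).1.
move=> s s' se s'e; have [Ysr FsY] := HY s se; have [Ys'r Fs'Y] := HY s' s'e.
by apply: lip FsY Fs'Y; rewrite ?(lt_le_trans se) ?(lt_le_trans s'e).
Qed.

End Zeros.

Section BaireCategory.
Context {T : topologicalType}.

Lemma nowhere_denseS (A B : set T) : A `<=` B -> nowhere_dense B -> nowhere_dense A.
Proof.
rewrite /nowhere_dense -!subset0 => AB; apply: subset_trans.
exact/interiorS/closureS.
Qed.

Lemma nowhere_dense0 : nowhere_dense (@set0 T).
Proof. by rewrite /nowhere_dense closure0 interior0. Qed.

Lemma nowhere_dense_closedD_interior (S : set T) :
  closed S -> nowhere_dense (S `\` S°).
Proof.
move=> cS; rewrite /nowhere_dense -subset0 => g clg.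
have clS : closure (S `\` S°) `<=` S.
  by move=> y /(closureS (@subDsetl _ _ _)); exact: cS.
have : (closure (S `\` S°))° `<=` S° := interiorS clS.
move=> /(_ g clg) Sg.
have nSg : nbhs g S° := open_nbhs_nbhs (conj (@open_interior _ _) Sg).
by have [y [[_ nSy] Sy]] := interior_subset clg _ nSg.
Qed.

Lemma meager_countable_cover (I : Type) (D : set I) (F : I -> set T) (S : set T) :
  countable D -> (forall i, D i -> nowhere_dense (F i)) ->
  S `<=` \bigcup_(i in D) F i -> meager S.
Proof.
move=> /countable_injP [f finj] ndF SF.
exists (fun k => \bigcup_(i in [set i | D i /\ f i = k]) F i); split; last first.
  by move=> x /SF [i Di Fix]; exists (f i) => //; exists i.
move=> k; have [[i [Di fik]]|] := pselect (exists i, D i /\ f i = k).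
  apply: nowhere_denseS (ndF i Di) => x [j [Dj fjk] Fjx].
  by rewrite -(finj j i) ?inE // fjk.
move=> nk; apply: nowhere_denseS nowhere_dense0 => x [j Dj _].
exact: nk (ex_intro _ j Dj).
Qed.

Lemma dense_closureC (A : set T) : nowhere_dense A -> dense (~` closure A).
Proof.
move=> ndA O [z Oz] oO; apply/set0P/eqP => OA.
have : (closure A)° z.
  apply: filterS (open_nbhs_nbhs (conj oO Oz)) => y Oy.
  by apply: contrapT => nAy; rewrite -[False]/(set0 y) -OA.
by rewrite ndA.
Qed.

Lemma baire_meager_interior (S : set T) : baire_space T -> meager S -> S° = set0.
Proof.
move=> hbaire [F [ndF SF]]; rewrite -subset0 => g Sg.
have oD i : open (~` closure (F i)) by exact/closed_openC/closed_closure.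
have [h [Sh Dh]] := hbaire _ (fun i => conj (oD i) (dense_closureC _ (ndF i)))
  _ (ex_intro _ g Sg) (@open_interior _ _).
have [k _ Fkh] := SF h (interior_subset Sh).
exact: Dh k I (subset_closure Fkh).
Qed.

Lemma baire_closed_meager (S : set T) :
  baire_space T -> closed S -> meager S -> nowhere_dense S.
Proof.
move=> hbaire cS mS.
by rewrite /nowhere_dense -(proj1 (closure_id S) cS) baire_meager_interior.
Qed.

End BaireCategory.

Section Shadow.
Context {G X : topologicalType} (H : set (G * X)).

Definition shadow (K : set X) : set G := [set g | exists x, K x /\ H (g, x)].

Lemma shadowS {K K' : set X} : K `<=` K' -> shadow K `<=` shadow K'.
Proof. by move=> KK' g [x [Kx Hgx]]; exists x; split => //; exact: KK'. Qed.

Lemma closed_shadow (K : set X) : closed H -> compact K -> closed (shadow K).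
Proof.
move=> cH cK g cg.
pose S (A : set G) := [set x | K x /\ exists a, A a /\ H (a, x)].
pose F := filter_from (nbhs g) S.
have FF : ProperFilter F.
  apply: filter_from_proper.
    apply: filter_from_filter; first by exists setT; exact: filterT.
    move=> A B hA hB; exists (A `&` B); first exact: filterI.
    by move=> x [Kx [a [[Aa Ba] Ha]]]; split; split=> //; exists a.
  move=> A hA; have [a [[x [Kx Hax]] Aa]] := cg A hA.
  by exists x; split => //; exists a.
have FK : F K by exists setT; [exact: filterT | move=> x []].
have [x [Kx clx]] := cK F FF FK.
exists x; split => //; apply: cH => N hN.
case: hN => -[A B] /= [hA hB] hAB.
have [x' [[Kx' [a [Aa Hax']]] Bx']] :=
  clx (S A) B (ex_intro2 _ _ A hA (fun _ h => h)) hB.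
by exists (a, x'); split => //; apply: hAB.
Qed.

Lemma meager_projection :
  hausdorff_space X -> second_countable (T := X) -> closed H ->
  (forall g x, H (g, x) -> exists K, [/\ compact K, nbhs x K & ~ (shadow K)° g]) ->
  meager [set g | exists x, H (g, x)].
Proof.
move=> hX [B cB bB] cH hK.
pose E b := if pselect (compact (closure b)) is left _
            then shadow (closure b) `\` (shadow (closure b))° else set0.
apply: (@meager_countable_cover _ _ B E) => // [b _|g [x Hgx]].
  rewrite /E; case: pselect => [cb|_]; last exact: nowhere_dense0.
  exact/nowhere_dense_closedD_interior/closed_shadow.
have [K [cK nK nKg]] := hK g x Hgx.
have [b [Bb bx] bK] := bB.2 x K nK.
have clbK : closure b `<=` K.
  by move=> y /(closureS bK); apply: compact_closed.
exists b => //; rewrite /E; case: pselect => [_|[]]; last first.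
  exact: subclosed_compact (@closed_closure _ b) cK clbK.
split; first by exists x; split => //; exact: subset_closure.
by move/(interiorS (shadowS clbK)).
Qed.

End Shadow.

Lemma nbhs_row_mx {R : realType} {n m} (s0 : 'rV[R]_n) (y0 : 'rV[R]_m)
    (A : set 'rV[R]_n) (B : set 'rV[R]_m) :
  nbhs s0 A -> nbhs y0 B ->
  nbhs (row_mx s0 y0) [set z : 'rV[R]_(n + m) | A (lsubmx z) /\ B (rsubmx z)].
Proof.
move=> nA nB; apply: filterI.
  by apply: continuous_lsubmx; rewrite row_mxKl.
by apply: continuous_rsubmx; rewrite row_mxKr.
Qed.

Section Charts.
Context {R : realType} {X : topologicalType} {m : nat} (c : chart R X m).
Hypothesis chart_c : is_chart c.

Lemma chart_map_continuous x : ch_dom c x -> {for x, continuous (ch_map c)}.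
Proof.
have [[odom _] cmap _ _ _] := chart_c.
move=> dx; move: cmap; rewrite continuous_open_subspace //.
by move=> /(_ x); apply; rewrite inE.
Qed.

Lemma chart_inv_continuous y :
  (ch_map c @` ch_dom c) y -> {for y, continuous (ch_inv c)}.
Proof.
have [[_ oimg] _ cinv _ _] := chart_c.
move=> iy; move: cinv; rewrite continuous_open_subspace //.
by move=> /(_ y); apply; rewrite inE.
Qed.

Lemma nbhs_chart_image x (S : set X) : ch_dom c x -> nbhs x S ->
  nbhs (ch_map c x) [set y | (ch_map c @` ch_dom c) y /\ S (ch_inv c y)].
Proof.
have [[_ oimg] _ _ inv_map _] := chart_c.
move=> dx nS; apply: filterI; first by apply: open_nbhs_nbhs; split => //; exists x.
have := chart_inv_continuous _ (ex_intro2 _ _ x dx erefl).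
by rewrite /prop_for /continuous_at inv_map // => /(_ S nS).
Qed.

(* Witness: the preimage of a small closed ball around [ch_map c x]. *)
Lemma compact_nbhs_chart x (W : set X) : ch_dom c x -> nbhs x W ->
  exists K, [/\ compact K, nbhs x K & K `<=` W].
Proof.
have [[odom _] _ _ inv_map map_inv] := chart_c.
move=> dx nW; pose y0 := ch_map c x.
have nWd : nbhs x (W `&` ch_dom c).
  exact: (@filterI _ _ (nbhs_filter x) _ _ nW (open_nbhs_nbhs (conj odom dx))).
have /nbhs_ballP [r /= r0 rW] := nbhs_chart_image _ _ dx nWd.
pose CB := closed_ball y0 (r / 2).
have CB_W :
    CB `<=` [set y | (ch_map c @` ch_dom c) y /\ (W `&` ch_dom c) (ch_inv c y)].
  have CBr : CB `<=` ball y0 r by apply: subset_closure_half.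
  by move=> y /CBr /rW.
exists (ch_inv c @` CB); split.
- apply: continuous_compact.
    apply: continuous_in_subspaceT => y; rewrite inE => /CB_W [iy _].
    exact: chart_inv_continuous.
  apply: bounded_closed_compact; last exact: closed_ball_closed.
  rewrite /CB closed_ballE ?divr_gt0 // /= /bounded_near; near=> M => y /= y0y.
  rewrite -[y](subrK y0) (le_trans (ler_normD _ _)) // -lerBrDr.
  apply: le_trans (_ : r / 2 <= _); first by rewrite distrC.
  by rewrite lerBrDr; near: M; apply: nbhs_pinfty_ge; exact: num_real.
- have nCB : nbhs x (ch_map c @^-1` ball y0 (r / 2)).
    by apply: chart_map_continuous => //; apply: nbhsx_ballx; rewrite divr_gt0.
  have ndom : nbhs x (ch_dom c) := open_nbhs_nbhs (conj odom dx).
  apply: filterS (@filterI _ _ (nbhs_filter x) _ _ nCB ndom).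
  move=> x' [bx' dx'].
  by exists (ch_map c x'); [exact: subset_closed_ball | exact: inv_map].
- by move=> _ [y /CB_W [_ [Wy _]] <-].
Unshelve. all: by end_near. Qed.

End Charts.

Lemma C1_atlas_compact_nbhs {R : realType} {X : topologicalType} {m}
    {Atl : set (chart R X m)} {x : X} {W : set X} :
  C1_atlas Atl -> nbhs x W -> exists K, [/\ compact K, nbhs x K & K `<=` W].
Proof.
move=> [Atl_chart Atl_cover _] nW; have [c [Ac dx]] := Atl_cover x.
exact: compact_nbhs_chart (Atl_chart c Ac) _ _ dx nW.
Qed.

Lemma slice_not_interior_shadow {R : realType} {G X : topologicalType} {m n}
    {Atl : set (chart R X m)} {H : set (G * X)} {g0 : G} {x0 : X} :
  C1_atlas Atl -> (m < n)%N -> slice Atl H g0 x0 n ->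
  exists2 W, nbhs x0 W & ~ (shadow H W)° g0.
Proof.
move=> [Atl_chart Atl_cover _] mn.
move=> [U [V [rho [pi [[[oU U0] [oV Vx0]] [crho rho0] [_ pi0] C1 det0]]]]].
have [c [Ac dx0]] := Atl_cover x0.
have chart_c := Atl_chart c Ac; have [[odom _] _ _ inv_map map_inv] := chart_c.
pose y0 := ch_map c x0.
pose F (z : 'rV[R]_(n + m)) := pi (rho (lsubmx z)) (ch_inv c (rsubmx z)).
have ndV : nbhs x0 (ch_dom c `&` V).
  exact: open_nbhs_nbhs (conj (openI odom oV) (conj dx0 Vx0)).
have nimg : nbhs y0 (ch_map c @` (ch_dom c `&` V)).
  near=> y.
  have [iy dVy] : (ch_map c @` ch_dom c) y /\ (ch_dom c `&` V) (ch_inv c y).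
    by near: y; exact: nbhs_chart_image.
  by exists (ch_inv c y) => //; exact: map_inv.
have nD : \forall z \near row_mx 0 y0,
    U (lsubmx z) /\ (ch_map c @` (ch_dom c `&` V)) (rsubmx z).
  exact: nbhs_row_mx _ _ _ _ (open_nbhs_nbhs (conj oU U0)) nimg.
have dF : \forall z \near row_mx 0 y0, differentiable F z.
  by apply: filterS nD => z Dz; exact: (C1 c Ac z Dz).1.
have dFc v : {for row_mx 0 y0, continuous ('D_v F)}.
  exact: (C1 c Ac _ (nbhs_singleton nD)).2.
have F_y0 : (fun s => F (row_mx s y0)) = (fun s => pi (rho s) x0).
  by apply/funext => s; rewrite /F row_mxKl row_mxKr inv_map.
have det_F : \det ('J (fun s => F (row_mx s y0)) 0) != 0 by rewrite F_y0.
have [delta d0 zero_free] := small_zero_free_params F y0 mn dF dFc det_F.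
pose W := [set x | ch_dom c x /\ V x /\ `|ch_map c x - y0| < delta].
exists W.
  have nball : nbhs x0 (ch_map c @^-1` ball y0 delta).
    by apply: chart_map_continuous chart_c _ dx0 _ _; exact: nbhsx_ballx.
  apply: filterS (@filterI _ _ (nbhs_filter x0) _ _ nball ndV) => x [bx [dx Vx]].
  by split => //; split => //; move: bx; rewrite /= -ball_normE /= distrC.
move=> shadow_g0.
have rho_cont : {for 0, continuous rho}.
  move: crho; rewrite continuous_open_subspace //.
  by move=> /(_ 0); apply; rewrite inE.
have nS : nbhs (0 : 'rV[R]_n) (rho @^-1` (shadow H W)°).
  apply: rho_cont; rewrite rho0.
  exact: open_nbhs_nbhs (conj (@open_interior _ _) shadow_g0).
have /nbhs_ballP [eps /= eps0 epsS] :=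
  @filterI _ _ (nbhs_filter (0 : 'rV[R]_n)) _ _ nS (open_nbhs_nbhs (conj oU U0)).
have [s [s_eps s_free]] := zero_free eps eps0.
have [/interior_subset [x [[dx [Vx xd]] Hsx]] Us] :
    (rho @^-1` (shadow H W)° `&` U) s.
  by apply: epsS; rewrite -ball_normE /= sub0r normrN.
have rho_s : (rho @` U) (rho s) by exists s.
by have := s_free _ xd; rewrite /F row_mxKl row_mxKr inv_map // pi0 ?eqxx.
Unshelve. all: by end_near. Qed.

Theorem theorem4p2 (R : realType) (G X : topologicalType) (m : nat)
    (Atl : set (chart R X m)) (H : set (G * X)) :
  second_countable (T := G) -> baire_space G ->
  hausdorff_space X -> second_countable (T := X) -> C1_atlas Atl ->
  closed H ->
  (forall (g0 : G) (x0 : X), H (g0, x0) ->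
     exists n : nat, (m < n)%N /\ slice Atl H g0 x0 n) ->
  meager [set g : G | exists x : X, H (g, x)] /\
  (compact [set: X] ->
     closed [set g : G | exists x : X, H (g, x)] /\
     nowhere_dense [set g : G | exists x : X, H (g, x)]).
Proof.
move=> _ baireG hausX scX atlas cH slices.
have meagerP : meager [set g | exists x, H (g, x)].
  apply: (meager_projection H hausX scX cH) => g x Hgx.
  have [n [mn slice_gx]] := slices g x Hgx.
  have [W nW not_int] := slice_not_interior_shadow atlas mn slice_gx.
  have [K [cK nK KW]] := C1_atlas_compact_nbhs atlas nW.
  by exists K; split => // /(interiorS (shadowS H KW)).
split => // cX.
have closedP : closed [set g | exists x, H (g, x)].
  have -> : [set g | exists x, H (g, x)] = shadow H setT.
    by apply/seteqP; split => g [x]; [exists x | case=> _; exists x].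
  exact: closed_shadow.
by split => //; exact: baire_closed_meager.
Qed.
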